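(* Let $\ell\in\{0,1,2,\ldots\}$. As $q\to\infty$, $\tilde\gamma_\ell(q)$ has the asymptotic expansion $$\tilde\gamma_\ell(q)\sim\frac{\log^\ell q}{2q}-\frac{\ell\log^{\ell-1}q-\log^\ell q}{4q^2}+\sum_{k=1}^\infty\frac{E_{2k+1}(0)}{2q^{2k+2}(2k+1)!}\sum_{j=0}^{\ell}\binom{\ell}{j}j!\,s(2k+2,j+1)\log^{\ell-j}q .$$
   Context: For $q>0$, $\zeta_E(z,q)=\sum_{n=0}^\infty (-1)^n (n+q)^{-z}$ for $\mathrm{Re}(z)>0$, extended by analytic continuation to an entire function of $z$. The modified Stieltjes constants $\tilde\gamma_k(q)$ are defined by the Taylor expansion $\zeta_E(z,q)=\sum_{k=0}^\infty\frac{(-1)^k\tilde\gamma_k(q)}{k!}(z-1)^k$. $E_n(x)$ is the $n$-th Euler polynomial, defined by $\frac{2e^{xt}}{e^t+1}=\sum_{n\ge0}E_n(x)\frac{t^n}{n!}$. $s(n,k)$ are the (signed) Stirling numbers of the first kind: $x(x-1)\cdots(x-n+1)=\sum_{k=0}^n s(n,k)x^k$. The symbol $\sim$ means asymptotic expansion in the sense of Poincaré (each truncation has error of the order of the first omitted term) as $q\to\infty$. *)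

From Stdlib Require Import Reals Factorial.
From Coquelicot Require Import Coquelicot.
Open Scope R_scope.

(* Alternating Hurwitz zeta function, for real z > 0 (where the series
   converges); its real restriction determines its Taylor coefficients at 1. *)
Definition zetaE (z q : R) : R :=
  Series (fun n : nat => (-1) ^ n * Rpower (INR n + q) (- z)).

(* Modified Stieltjes constants: zeta_E(z,q) = sum_k (-1)^k g_k(q)/k! (z-1)^k,
   i.e. g_k(q) = (-1)^k * (d/dz)^k zeta_E(z,q) at z = 1. *)
Definition mstieltjes (k : nat) (q : R) : R :=
  (-1) ^ k * Derive_n (fun z => zetaE z q) k 1.

Definition euler_poly (n : nat) (x : R) : R :=
  Derive_n (fun t => 2 * exp (x * t) / (exp t + 1)) n 0.

Fixpoint fallfact (n : nat) (x : R) : R :=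
  match n with
  | O => 1
  | S m => fallfact m x * (x - INR m)
  end.

(* Signed Stirling numbers of the first kind: coefficient of x^k in fallfact n. *)
Definition stirling1 (n k : nat) : R :=
  Derive_n (fallfact n) k 0 / INR (fact k).

Definition asym_term (l k : nat) (q : R) : R :=
  euler_poly (2 * k + 1) 0 / (2 * q ^ (2 * k + 2) * INR (fact (2 * k + 1))) *
  sum_f_R0 (fun j => Binomial.C l j * INR (fact j) * stirling1 (2 * k + 2) (j + 1)
                     * ln q ^ (l - j)) l.

Fixpoint asym_partial (l N : nat) (q : R) : R :=
  match N with
  | O => ln q ^ l / (2 * q) - (INR l * ln q ^ (l - 1) - ln q ^ l) / (4 * q ^ 2)
  | S M => asym_partial l M q + asym_term l (S M) q
  end.

(* For large [q] the alternating series of [zetaE] converges uniformly for [z] near 1 together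
   with all its [z]-derivatives, so [mstieltjes l q = sum_n (-1)^n g (n + q)] with
   [g x = ln x ^ l / x].  The [m]-th derivative of [g] is [x^-(m+1)] times a polynomial in
   [ln x] with coefficients [C(l,j) j! s(m+1,j+1)].  Put [P x = 1/2 sum_(k <= M) E_k(0)/k! g^(k)(x)]
   (Boole's summation).  Taylor's formula for each [g^(k)] and the identity
   [sum_k C(m,k) E_k(0) + E_m(0) = 0] (Leibniz's rule on [e^t/(e^t+1) = 1 - 1/(e^t+1)]) give
   [g x - P x - P (x + 1) = O(x^-(M+1))], and summing with alternating signs telescopes to
   [mstieltjes l q - P q = O(q^-M)].  Finally [E_(2k)(0) = 0] for [k >= 1], as
   [1/(e^t+1) - 1/2] is odd, so [P] is the truncated asymptotic series. *)

From Stdlib Require Import Reals Factorial Lra Lia List FunctionalExtensionality.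
From Coquelicot Require Import Coquelicot.
Open Scope R_scope.

Lemma Derive_n_chain (f : R -> R) (d : nat -> R -> R) (U : R -> Prop) (K : nat) :
  open U ->
  (forall x, U x -> f x = d O x) ->
  (forall k x, (k < K)%nat -> U x -> is_derive (d k) x (d (S k) x)) ->
  forall k x, (k <= K)%nat -> U x -> Derive_n f k x = d k x.
Proof.
  intros HU Hf Hd k; induction k as [|k IH]; intros x Hk Hx; [exact (Hf x Hx)|].
  simpl. rewrite (Derive_ext_loc _ (d k)).
  - apply is_derive_unique, Hd; [lia | exact Hx].
  - apply (filter_imp U); [intros y Hy; apply IH; [lia | exact Hy] | exact (HU x Hx)].
Qed.

Lemma ex_derive_n_chain (f : R -> R) (d : nat -> R -> R) (U : R -> Prop) :
  open U ->
  (forall x, U x -> f x = d O x) ->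
  (forall k x, U x -> is_derive (d k) x (d (S k) x)) ->
  forall k x, U x -> ex_derive_n f k x.
Proof.
  intros HU Hf Hd [|k] x Hx; [exact I|].
  apply (ex_derive_ext_loc (d k)); [|eexists; exact (Hd k x Hx)].
  apply (filter_imp U); [|exact (HU x Hx)].
  intros y Hy. symmetry. apply (Derive_n_chain f d U k); auto.
Qed.

Lemma Derive_n_chain_R (f : R -> R) (d : nat -> R -> R) :
  (forall x, f x = d O x) ->
  (forall k x, is_derive (d k) x (d (S k) x)) ->
  forall k x, Derive_n f k x = d k x.
Proof.
  intros Hf Hd k x. apply (Derive_n_chain f d (fun _ => True) k); auto.
  apply open_true.
Qed.

Lemma is_derive_sum_f_R0 (f : nat -> R -> R) (df : nat -> R) n x :
  (forall k, (k <= n)%nat -> is_derive (f k) x (df k)) ->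
  is_derive (fun y => sum_f_R0 (fun k => f k y) n) x (sum_f_R0 df n).
Proof.
  intros H. rewrite <- sum_n_Reals.
  apply (is_derive_ext (fun y => sum_n (fun k => f k y) n)); [intros y; apply sum_n_Reals|].
  exact (is_derive_sum_n f n x df H).
Qed.

Definition bigO_on (P : R -> Prop) (f g : R -> R) : Prop :=
  exists C, 0 <= C /\ forall x, P x -> Rabs (f x) <= C * g x.

Lemma bigO_on_ext (P : R -> Prop) (f f' g : R -> R) :
  (forall x, P x -> f x = f' x) -> bigO_on P f g -> bigO_on P f' g.
Proof.
  intros E [C [HC H]]. exists C. split; [exact HC|]. intros x Hx. rewrite <- E; auto.
Qed.

Lemma bigO_on_le (P : R -> Prop) (f g h : R -> R) :
  (forall x, P x -> g x <= h x) -> bigO_on P f g -> bigO_on P f h.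
Proof.
  intros Hgh [C [HC H]]. exists C. split; [exact HC|]. intros x Hx.
  eapply Rle_trans; [apply H; exact Hx|]. apply Rmult_le_compat_l; auto.
Qed.

Lemma bigO_on_sub_dom (P P' : R -> Prop) (f g : R -> R) :
  (forall x, P' x -> P x) -> bigO_on P f g -> bigO_on P' f g.
Proof. intros HP [C [HC H]]. exists C. split; auto. Qed.

Lemma bigO_on_scal (P : R -> Prop) (a : R) (f g : R -> R) :
  bigO_on P f g -> bigO_on P (fun x => a * f x) g.
Proof.
  intros [C [HC H]]. exists (Rabs a * C). split; [apply Rmult_le_pos; auto; apply Rabs_pos|].
  intros x Hx. rewrite Rabs_mult, Rmult_assoc.
  apply Rmult_le_compat_l; [apply Rabs_pos | auto].
Qed.

Lemma bigO_on_mult_l (P : R -> Prop) (a f g : R -> R) :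
  bigO_on P f g -> bigO_on P (fun x => a x * f x) (fun x => Rabs (a x) * g x).
Proof.
  intros [C [HC H]]. exists C. split; [exact HC|]. intros x Hx.
  rewrite Rabs_mult. specialize (H x Hx). generalize (Rabs_pos (a x)). nra.
Qed.

Lemma bigO_on_plus (P : R -> Prop) (f1 f2 g : R -> R) :
  bigO_on P f1 g -> bigO_on P f2 g -> bigO_on P (fun x => f1 x + f2 x) g.
Proof.
  intros [C1 [HC1 H1]] [C2 [HC2 H2]]. exists (C1 + C2). split; [lra|].
  intros x Hx. eapply Rle_trans; [apply Rabs_triang|].
  specialize (H1 x Hx). specialize (H2 x Hx). lra.
Qed.

Lemma bigO_on_sum (P : R -> Prop) (f : nat -> R -> R) (g : R -> R) n :
  (forall k, (k <= n)%nat -> bigO_on P (f k) g) ->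
  bigO_on P (fun x => sum_f_R0 (fun k => f k x) n) g.
Proof.
  induction n as [|n IH]; intros H; [apply H; lia|].
  apply bigO_on_plus; [apply IH; intros; apply H; lia | apply H; lia].
Qed.

(** * Polynomials as coefficient lists *)

Fixpoint peval (p : list R) (y : R) : R :=
  match p with nil => 0 | a :: p' => a + y * peval p' y end.

Fixpoint padd (p q : list R) : list R :=
  match p, q with
  | nil, _ => q
  | _, nil => p
  | a :: p', b :: q' => (a + b) :: padd p' q'
  end.

Definition pscale (c : R) (p : list R) : list R := map (Rmult c) p.

Fixpoint pderiv (p : list R) : list R :=
  match p with nil => nil | a :: p' => padd p' (0 :: pderiv p') end.

Fixpoint pderiv_n (k : nat) (p : list R) : list R :=
  match k with O => p | S k' => pderiv (pderiv_n k' p) end.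

Lemma peval_add p q y : peval (padd p q) y = peval p y + peval q y.
Proof.
  revert q; induction p as [|a p IH]; intros [|b q]; simpl; try ring.
  rewrite IH; ring.
Qed.

Lemma peval_scale c p y : peval (pscale c p) y = c * peval p y.
Proof. induction p as [|a p IH]; simpl; [|rewrite IH]; ring. Qed.

Lemma nth_padd p q j : nth j (padd p q) 0 = nth j p 0 + nth j q 0.
Proof.
  revert q j; induction p as [|a p IH]; intros [|b q] [|j]; simpl; try ring.
  apply IH.
Qed.

Lemma nth_pscale c p j : nth j (pscale c p) 0 = c * nth j p 0.
Proof. revert j; induction p as [|a p IH]; intros [|j]; simpl; try ring; auto. Qed.

Lemma is_derive_peval p y : is_derive (peval p) y (peval (pderiv p) y).
Proof.
  induction p as [|a p IH]; simpl; [exact (is_derive_const _ _)|].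
  rewrite peval_add. simpl.
  replace (peval p y + (0 + y * peval (pderiv p) y))
    with (0 + (1 * peval p y + y * peval (pderiv p) y)) by ring.
  apply (is_derive_plus (fun _ => a) (fun y => y * peval p y)); [exact (is_derive_const _ _)|].
  apply (is_derive_mult (fun y => y) (peval p)); [exact (is_derive_id _) | exact IH |].
  intros; apply Rmult_comm.
Qed.

Lemma nth_pderiv p j : nth j (pderiv p) 0 = INR (S j) * nth (S j) p 0.
Proof.
  revert j; induction p as [|a p IH]; intros j; simpl; [destruct j; simpl; ring|].
  rewrite nth_padd. destruct j as [|j]; simpl nth; [simpl; ring|].
  rewrite IH. ring.
Qed.

Lemma nth_pderiv_n k p j :
  nth j (pderiv_n k p) 0 = INR (fact (j + k)) / INR (fact j) * nth (j + k) p 0.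
Proof.
  revert j; induction k as [|k IH]; intros j; simpl.
  - rewrite Nat.add_0_r. field. apply INR_fact_neq_0.
  - rewrite nth_pderiv, IH. replace (S j + k)%nat with (j + S k)%nat by lia.
    replace (j + S k)%nat with (S (j + k)) by lia.
    rewrite (fact_simpl j), (fact_simpl (j + k)), !mult_INR. field.
    split; [apply INR_fact_neq_0 | apply not_0_INR; lia].
Qed.

Lemma peval_0 p : peval p 0 = nth 0 p 0.
Proof. destruct p; simpl; ring. Qed.

Lemma Derive_n_peval_0 p k : Derive_n (peval p) k 0 = INR (fact k) * nth k p 0.
Proof.
  rewrite (Derive_n_chain_R (peval p) (fun k => peval (pderiv_n k p)))
    by (reflexivity || intros; apply is_derive_peval).
  rewrite peval_0, nth_pderiv_n. simpl. field.
Qed.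

(** * Euler numbers [E_k(0)] *)

Definition fermi (t : R) : R := / (exp t + 1).

Lemma exp_plus_1_pos t : 0 < exp t + 1.
Proof. generalize (exp_pos t); lra. Qed.

Lemma is_derive_fermi t : is_derive fermi t (fermi t ^ 2 - fermi t).
Proof.
  unfold fermi. auto_derive; generalize (exp_plus_1_pos t); intros; [lra | field; lra].
Qed.

Lemma fermi_opp t : fermi (- t) = 1 - fermi t.
Proof.
  unfold fermi. rewrite exp_Ropp. generalize (exp_pos t); intros. field. lra.
Qed.

(* Since [fermi' = fermi^2 - fermi], every derivative of [fermi] is a polynomial in [fermi]. *)
Fixpoint fermi_deriv_poly (k : nat) : list R :=
  match k with
  | O => 0 :: 1 :: nil
  | S k' => let p := pderiv (fermi_deriv_poly k') in padd (0 :: 0 :: p) (pscale (-1) (0 :: p))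
  end.

Definition fermi_deriv (k : nat) (t : R) : R := peval (fermi_deriv_poly k) (fermi t).

Lemma fermi_deriv_0 t : fermi_deriv 0 t = fermi t.
Proof. unfold fermi_deriv; simpl; ring. Qed.

Lemma is_derive_fermi_deriv k t : is_derive (fermi_deriv k) t (fermi_deriv (S k) t).
Proof.
  unfold fermi_deriv. cbn [fermi_deriv_poly].
  rewrite peval_add, peval_scale. simpl.
  replace (0 + fermi t * (0 + fermi t * peval (pderiv (fermi_deriv_poly k)) (fermi t)) +
           -1 * (0 + fermi t * peval (pderiv (fermi_deriv_poly k)) (fermi t)))
    with ((fermi t ^ 2 - fermi t) * peval (pderiv (fermi_deriv_poly k)) (fermi t)) by ring.
  apply (is_derive_comp (peval (fermi_deriv_poly k)) fermi);
    [apply is_derive_peval | apply is_derive_fermi].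
Qed.

Lemma Derive_n_compl_fermi k t :
  (1 <= k)%nat -> Derive_n (fun t => 1 - fermi t) k t = - fermi_deriv k t.
Proof.
  intros Hk.
  rewrite (Derive_n_chain_R _
    (fun k t => match k with O => 1 - fermi_deriv 0 t | _ => - fermi_deriv k t end)).
  - destruct k; [lia | reflexivity].
  - intros x. rewrite fermi_deriv_0. reflexivity.
  - intros [|j] x.
    + replace (- fermi_deriv 1 x) with (0 - fermi_deriv 1 x) by ring.
      apply (is_derive_minus (fun _ => 1) (fermi_deriv 0));
        [exact (is_derive_const _ _) | apply is_derive_fermi_deriv].
    + apply (is_derive_opp (fermi_deriv (S j))). apply is_derive_fermi_deriv.
Qed.

Lemma fermi_deriv_even_0 k : (1 <= k)%nat -> Nat.Even k -> fermi_deriv k 0 = 0.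
Proof.
  intros Hk [m Hm].
  assert (Hodd : Derive_n (fun t => fermi (- t)) k 0 = (-1) ^ k * fermi_deriv k (- 0)).
  { apply (Derive_n_chain_R _ (fun k t => (-1) ^ k * fermi_deriv k (- t))).
    - intros x. simpl. rewrite fermi_deriv_0. ring.
    - intros j x.
      replace ((-1) ^ S j * fermi_deriv (S j) (- x))
        with ((-1) ^ j * (-1 * fermi_deriv (S j) (- x))) by (simpl; ring).
      apply is_derive_scal.
      apply (is_derive_comp (fermi_deriv j) Ropp); [apply is_derive_fermi_deriv|].
      auto_derive; auto; ring. }
  rewrite (Derive_n_ext _ _ _ _ fermi_opp), Derive_n_compl_fermi in Hodd by exact Hk.
  subst k. rewrite Ropp_0, pow_1_even in Hodd. lra.
Qed.

Lemma sum_binomial_pascal (a : nat -> R) n :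
  sum_f_R0 (fun k => Binomial.C n k * a k) n + sum_f_R0 (fun k => Binomial.C n k * a (S k)) n
  = sum_f_R0 (fun k => Binomial.C (S n) k * a k) (S n).
Proof.
  destruct n as [|m].
  - simpl. rewrite !C_n_0. replace (Binomial.C 1 1) with 1 by (symmetry; apply C_n_n). ring.
  - rewrite (decomp_sum (fun k => Binomial.C (S m) k * a k)) by lia.
    rewrite (decomp_sum (fun k => Binomial.C (S (S m)) k * a k)) by lia.
    simpl pred. rewrite !C_n_0.
    change (sum_f_R0 (fun k => Binomial.C (S m) k * a (S k)) (S m)) with
      (sum_f_R0 (fun k => Binomial.C (S m) k * a (S k)) m + Binomial.C (S m) (S m) * a (S (S m))).
    change (sum_f_R0 (fun i => Binomial.C (S (S m)) (S i) * a (S i)) (S m)) with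
      (sum_f_R0 (fun i => Binomial.C (S (S m)) (S i) * a (S i)) m
       + Binomial.C (S (S m)) (S (S m)) * a (S (S m))).
    rewrite !C_n_n.
    rewrite (sum_eq (fun i => Binomial.C (S (S m)) (S i) * a (S i))
                    (fun i => Binomial.C (S m) (S i) * a (S i) + Binomial.C (S m) i * a (S i))).
    + rewrite sum_plus. ring.
    + intros i Hi. rewrite <- pascal by lia. ring.
Qed.

Lemma fermi_deriv_binomial_0 n :
  (1 <= n)%nat -> sum_f_R0 (fun k => Binomial.C n k * fermi_deriv k 0) n + fermi_deriv n 0 = 0.
Proof.
  intros Hn.
  assert (Hleib : Derive_n (fun t => fermi t * exp t) n 0
                  = exp 0 * sum_f_R0 (fun k => Binomial.C n k * fermi_deriv k 0) n).
  { apply (Derive_n_chain_R _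
      (fun n t => exp t * sum_f_R0 (fun k => Binomial.C n k * fermi_deriv k t) n)).
    - intros x. simpl. rewrite fermi_deriv_0, C_n_0. ring.
    - intros j x. rewrite <- sum_binomial_pascal, Rmult_plus_distr_l.
      apply (is_derive_mult exp); [apply is_derive_exp | | intros; apply Rmult_comm].
      apply (is_derive_sum_f_R0 (fun k y => Binomial.C j k * fermi_deriv k y)).
      intros k _. apply is_derive_scal, is_derive_fermi_deriv. }
  assert (Hcompl : forall t, fermi t * exp t = 1 - fermi t).
  { intros t. unfold fermi. generalize (exp_plus_1_pos t). intros. field. lra. }
  rewrite (Derive_n_ext _ _ _ _ Hcompl), Derive_n_compl_fermi, exp_0 in Hleib by exact Hn.
  lra.
Qed.

Lemma euler_poly_0_fermi k : euler_poly k 0 = 2 * fermi_deriv k 0.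
Proof.
  unfold euler_poly.
  rewrite (Derive_n_ext _ (fun t => 2 * fermi_deriv 0 t)), Derive_n_scal_l.
  - f_equal. apply (Derive_n_chain_R _ fermi_deriv); [reflexivity | apply is_derive_fermi_deriv].
  - intros t. rewrite fermi_deriv_0, Rmult_0_l, exp_0. unfold fermi.
    field. generalize (exp_plus_1_pos t); lra.
Qed.

Lemma euler_poly_0_0 : euler_poly 0 0 = 1.
Proof. rewrite euler_poly_0_fermi, fermi_deriv_0. unfold fermi. rewrite exp_0. field. Qed.

Lemma euler_poly_even_0 j : (1 <= j)%nat -> euler_poly (2 * j) 0 = 0.
Proof.
  intros Hj. rewrite euler_poly_0_fermi, fermi_deriv_even_0; [ring | lia | exists j; reflexivity].
Qed.

Lemma euler_poly_0_binomial m :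
  (1 <= m)%nat -> sum_f_R0 (fun k => Binomial.C m k * euler_poly k 0) m + euler_poly m 0 = 0.
Proof.
  intros Hm. rewrite (sum_eq _ (fun k => Binomial.C m k * fermi_deriv k 0 * 2))
    by (intros; rewrite euler_poly_0_fermi; ring).
  rewrite <- scal_sum, euler_poly_0_fermi.
  generalize (fermi_deriv_binomial_0 m Hm). lra.
Qed.

Lemma euler_poly_1_0 : euler_poly 1 0 = - 1 / 2.
Proof.
  generalize (euler_poly_0_binomial 1 (le_n 1)). simpl.
  rewrite euler_poly_0_0, C_n_0, (C_n_n 1). lra.
Qed.

Lemma euler_poly_0_convolution m :
  sum_f_R0 (fun k => euler_poly k 0 / INR (fact k) / INR (fact (m - k))) m =
  match m with O => 1 | _ => - euler_poly m 0 / INR (fact m) end.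
Proof.
  destruct m as [|m]; [simpl; rewrite euler_poly_0_0; field|].
  assert (Hf := INR_fact_lt_0 (S m)).
  apply (Rmult_eq_reg_r (INR (fact (S m)))); [|lra].
  rewrite (Rmult_comm (sum_f_R0 _ _)), scal_sum.
  replace (- euler_poly (S m) 0 / INR (fact (S m)) * INR (fact (S m)))
    with (- euler_poly (S m) 0) by (field; lra).
  rewrite <- (sum_eq (fun k => Binomial.C (S m) k * euler_poly k 0)).
  - generalize (euler_poly_0_binomial (S m) ltac:(lia)). lra.
  - intros i Hi. unfold Binomial.C. field. split; apply INR_fact_neq_0.
Qed.

Fixpoint fallfact_coefs (n : nat) : list R :=
  match n with
  | O => 1 :: nil
  | S m => padd (0 :: fallfact_coefs m) (pscale (- INR m) (fallfact_coefs m))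
  end.

Lemma fallfact_peval n x : fallfact n x = peval (fallfact_coefs n) x.
Proof.
  induction n as [|n IH]; [simpl; ring|].
  cbn [fallfact fallfact_coefs]. rewrite peval_add, peval_scale, IH. simpl. ring.
Qed.

Lemma stirling1_nth n k : stirling1 n k = nth k (fallfact_coefs n) 0.
Proof.
  unfold stirling1.
  rewrite (Derive_n_ext _ (peval (fallfact_coefs n))), Derive_n_peval_0 by apply fallfact_peval.
  field. apply INR_fact_neq_0.
Qed.

Lemma stirling1_succ n j : stirling1 (S n) (S j) = stirling1 n j - INR n * stirling1 n (S j).
Proof. rewrite !stirling1_nth. cbn [fallfact_coefs]. rewrite nth_padd, nth_pscale. simpl. ring. Qed.

Lemma stirling1_succ_0 n : stirling1 (S n) 0 = 0.
Proof.
  rewrite stirling1_nth. induction n as [|n IH]; [simpl; ring|].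
  change (nth 0 (padd (0 :: fallfact_coefs (S n)) (pscale (- INR (S n)) (fallfact_coefs (S n)))) 0
          = 0).
  rewrite nth_padd, nth_pscale, IH. simpl. ring.
Qed.

Lemma stirling1_1_1 : stirling1 1 1 = 1.
Proof. rewrite stirling1_nth. simpl. ring. Qed.

Lemma stirling1_1_SS j : stirling1 1 (S (S j)) = 0.
Proof. rewrite stirling1_nth. simpl. destruct j; reflexivity. Qed.

Definition lnpow_coef (l m j : nat) : R :=
  Binomial.C l j * INR (fact j) * stirling1 (m + 1) (j + 1).

Definition lnpow_div_deriv (l m : nat) (x : R) : R :=
  / x ^ (m + 1) * sum_f_R0 (fun j => lnpow_coef l m j * ln x ^ (l - j)) l.

Lemma binomial_fact_succ l i : (i < l)%nat ->
  Binomial.C l (S i) * INR (fact (S i)) = Binomial.C l i * INR (fact i) * INR (l - i).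
Proof.
  intros Hi. unfold Binomial.C.
  replace (l - i)%nat with (S (l - S i)) by lia.
  rewrite (fact_simpl (l - S i)), !mult_INR.
  field. repeat split; try apply INR_fact_neq_0. apply not_0_INR; lia.
Qed.

Lemma lnpow_coef_sum_succ l m L :
  sum_f_R0 (fun j => lnpow_coef l (S m) j * L ^ (l - j)) l
  = - (INR m + 1) * sum_f_R0 (fun j => lnpow_coef l m j * L ^ (l - j)) l
    + sum_f_R0 (fun j => lnpow_coef l m j * (INR (l - j) * L ^ pred (l - j))) l.
Proof.
  unfold lnpow_coef. rewrite scal_sum, <- sum_plus.
  rewrite (sum_eq _ (fun j => Binomial.C l j * INR (fact j) * stirling1 (m + 1) j * L ^ (l - j)
     + Binomial.C l j * INR (fact j) * stirling1 (m + 1) (j + 1) * L ^ (l - j) * - (INR m + 1))).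
  2: { intros j _. replace (S m + 1)%nat with (S (m + 1)) by lia.
       replace (j + 1)%nat with (S j) by lia. rewrite stirling1_succ, plus_INR. simpl. ring. }
  rewrite !sum_plus, (Rplus_comm (sum_f_R0 _ l)). f_equal.
  replace (m + 1)%nat with (S m) by lia.
  destruct l as [|l]; [simpl; rewrite stirling1_succ_0; ring|].
  rewrite decomp_sum, tech5, stirling1_succ_0, Nat.sub_diag by lia. change (pred (S l)) with l.
  rewrite Rmult_0_r, Rmult_0_l, Rplus_0_l. simpl INR at 2. rewrite Rmult_0_l, Rmult_0_r, Rplus_0_r.
  apply sum_eq. intros i Hi.
  replace (S i) with (i + 1)%nat at 3 by lia.
  replace (S l - S i)%nat with (pred (S l - i)) by lia.
  rewrite (binomial_fact_succ (S l) i) by lia. ring.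
Qed.

Lemma is_derive_lnpow_div_deriv l m x :
  0 < x -> is_derive (lnpow_div_deriv l m) x (lnpow_div_deriv l (S m) x).
Proof.
  intros Hx. unfold lnpow_div_deriv.
  set (S0 := fun y => sum_f_R0 (fun j => lnpow_coef l m j * ln y ^ (l - j)) l).
  set (S1 := sum_f_R0 (fun j => lnpow_coef l m j * (INR (l - j) * ln x ^ pred (l - j))) l).
  assert (HS : is_derive S0 x (S1 / x)).
  { unfold S0, S1, Rdiv. rewrite (Rmult_comm (sum_f_R0 _ l) (/ x)), scal_sum.
    apply (is_derive_sum_f_R0 (fun j y => lnpow_coef l m j * ln y ^ (l - j))).
    intros j _. auto_derive; [exact Hx | ring]. }
  replace (/ x ^ (S m + 1) * sum_f_R0 (fun j => lnpow_coef l (S m) j * ln x ^ (l - j)) l)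
    with (- INR (m + 1) / x ^ (m + 2) * S0 x + / x ^ (m + 1) * (S1 / x)).
  - apply (is_derive_mult (fun y => / y ^ (m + 1)) S0); [|exact HS | intros; apply Rmult_comm].
    auto_derive; [apply pow_nonzero; lra|].
    replace (m + 2)%nat with (S (S m)) by lia. replace (m + 1)%nat with (S m) by lia.
    simpl pred. simpl pow. field. split; [apply pow_nonzero|]; lra.
  - rewrite lnpow_coef_sum_succ. unfold S0, S1. rewrite plus_INR.
    replace (S m + 1)%nat with (S (m + 1)) by lia. replace (m + 2)%nat with (S (m + 1)) by lia.
    simpl pow. simpl INR. field. split; [apply pow_nonzero|]; lra.
Qed.

Lemma lnpow_div_deriv_0 l x : 0 < x -> lnpow_div_deriv l 0 x = ln x ^ l / x.
Proof.
  intros Hx. unfold lnpow_div_deriv, lnpow_coef. simpl Nat.add.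
  destruct l as [|l]; [simpl; rewrite stirling1_1_1; unfold Binomial.C; simpl; field; lra|].
  rewrite decomp_sum by lia. simpl pred.
  rewrite (sum_eq _ (fun _ => 0)).
  - rewrite sum_cte, C_n_0. simpl. rewrite stirling1_1_1. field. lra.
  - intros i _. replace (S i + 1)%nat with (S (S i)) by lia. rewrite stirling1_1_SS. ring.
Qed.

Lemma lnpow_div_deriv_1 l x :
  0 < x -> lnpow_div_deriv l 1 x = (INR l * ln x ^ (l - 1) - ln x ^ l) / x ^ 2.
Proof.
  intros Hx.
  rewrite <- (is_derive_unique _ _ _ (is_derive_lnpow_div_deriv l 0 x Hx)).
  rewrite (Derive_ext_loc _ (fun y => ln y ^ l / y)).
  - apply is_derive_unique. auto_derive; [lra|]. rewrite Nat.sub_1_r. field. lra.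
  - apply (filter_imp (fun y => 0 < y)); [apply lnpow_div_deriv_0|].
    apply (open_gt 0); exact Hx.
Qed.

Lemma Derive_n_lnpow_div_deriv l k j x :
  0 < x -> Derive_n (lnpow_div_deriv l k) j x = lnpow_div_deriv l (k + j) x.
Proof.
  apply (Derive_n_chain _ (fun j => lnpow_div_deriv l (k + j)) (fun t => 0 < t) j);
    [apply open_gt | intros; rewrite Nat.add_0_r; reflexivity | | lia].
  intros i y _ Hy. rewrite <- plus_n_Sm. apply is_derive_lnpow_div_deriv, Hy.
Qed.

Lemma lnpow_div_deriv_taylor l k n x : 0 < x -> exists zeta, x < zeta < x + 1 /\
  lnpow_div_deriv l k (x + 1)
  = sum_f_R0 (fun j => lnpow_div_deriv l (k + j) x / INR (fact j)) n
    + lnpow_div_deriv l (k + S n) zeta / INR (fact (S n)).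
Proof.
  intros Hx.
  assert (Hex : forall j y, 0 < y -> ex_derive_n (lnpow_div_deriv l k) j y).
  { apply (ex_derive_n_chain _ (fun j => lnpow_div_deriv l (k + j)) (fun t => 0 < t));
      [apply open_gt | intros; rewrite Nat.add_0_r; reflexivity |].
    intros i y Hy. rewrite <- plus_n_Sm. apply is_derive_lnpow_div_deriv, Hy. }
  destruct (Taylor_Lagrange (lnpow_div_deriv l k) n x (x + 1))
    as [zeta [Hz Heq]]; [lra | intros t Ht j _; apply Hex; lra|].
  exists zeta. split; [exact Hz|]. rewrite Heq.
  replace (x + 1 - x) with 1 by ring. rewrite pow1, Derive_n_lnpow_div_deriv by lra.
  f_equal; [apply sum_eq; intros i _; rewrite pow1, Derive_n_lnpow_div_deriv by lra|];
    field; apply INR_fact_neq_0.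
Qed.

Lemma pow_div_fact_le_exp y n : 0 <= y -> y ^ n / INR (fact n) <= exp y.
Proof.
  intros Hy. eapply Rle_trans; [|apply (exp_ge_taylor y n Hy)].
  destruct n as [|n]; [simpl; lra|].
  rewrite tech5. enough (0 <= sum_f_R0 (fun k => y ^ k / INR (fact k)) n) by lra.
  apply cond_pos_sum. intros k. apply Rdiv_le_0_compat; [apply pow_le, Hy | apply INR_fact_lt_0].
Qed.

Lemma ln_pow_le_sqrt n x : 1 <= x -> ln x ^ n <= 2 ^ n * INR (fact n) * sqrt x.
Proof.
  intros Hx. assert (HL : 0 <= ln x) by (rewrite <- ln_1; apply ln_le; lra).
  assert (H := pow_div_fact_le_exp (ln x / 2) n ltac:(lra)).
  replace (sqrt x) with (exp (ln x / 2))
    by (rewrite <- Rpower_sqrt by lra; unfold Rpower; f_equal; field).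
  assert (Hf := INR_fact_lt_0 n).
  replace (ln x ^ n) with (2 ^ n * INR (fact n) * ((ln x / 2) ^ n / INR (fact n))).
  - apply Rmult_le_compat_l; [apply Rmult_le_pos; [apply pow_le | ]|]; lra.
  - unfold Rdiv. rewrite Rpow_mult_distr, pow_inv. field. split; [lra | apply pow_nonzero; lra].
Qed.

Lemma exp_le_ln a x : exp a <= x -> a <= ln x.
Proof. intros H. rewrite <- (ln_exp a). apply ln_le; [apply exp_pos | exact H]. Qed.

Lemma lnpow_sum_bigO_sqrt (c : nat -> R) l :
  bigO_on (fun x => 1 <= x) (fun x => sum_f_R0 (fun j => c j * ln x ^ (l - j)) l) sqrt.
Proof.
  apply bigO_on_sum. intros j _. apply bigO_on_scal.
  exists (2 ^ (l - j) * INR (fact (l - j))). split.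
  - apply Rmult_le_pos; [apply pow_le; lra | apply pos_INR].
  - intros x Hx. rewrite Rabs_right; [apply ln_pow_le_sqrt, Hx|].
    apply Rle_ge, pow_le. rewrite <- ln_1. apply ln_le; lra.
Qed.

Lemma lnpow_sum_bigO_lnpow (c : nat -> R) l :
  bigO_on (fun x => exp 1 <= x) (fun x => sum_f_R0 (fun j => c j * ln x ^ (l - j)) l)
    (fun x => ln x ^ l).
Proof.
  apply bigO_on_sum. intros j _. apply bigO_on_scal.
  exists 1. split; [lra|]. intros x Hx.
  assert (HL : 1 <= ln x) by (apply exp_le_ln, Hx).
  rewrite Rabs_right, Rmult_1_l; [apply Rle_pow; [exact HL | lia]|].
  apply Rle_ge, pow_le. lra.
Qed.

Lemma lnpow_div_deriv_bigO l m :
  bigO_on (fun x => 1 <= x) (lnpow_div_deriv l m) (fun x => / (sqrt x * x ^ m)).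
Proof.
  eapply bigO_on_le; [|apply (bigO_on_mult_l _ (fun x => / x ^ (m + 1))), lnpow_sum_bigO_sqrt].
  intros x Hx. cbv beta. assert (Hs : 0 < sqrt x) by (apply sqrt_lt_R0; lra).
  replace (x ^ (m + 1)) with (sqrt x * sqrt x * x ^ m)
    by (rewrite sqrt_sqrt, pow_add by lra; ring).
  rewrite Rabs_right by (apply Rle_ge, Rlt_le, Rinv_0_lt_compat, Rmult_lt_0_compat;
                         [nra | apply pow_lt; lra]).
  right. field. split; [apply pow_nonzero|]; lra.
Qed.

Lemma lnpow_div_deriv_bigO_lnpow l m :
  bigO_on (fun x => exp 1 <= x) (lnpow_div_deriv l m) (fun x => ln x ^ l / x ^ (m + 1)).
Proof.
  eapply bigO_on_le; [|apply (bigO_on_mult_l _ (fun x => / x ^ (m + 1))), lnpow_sum_bigO_lnpow].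
  intros x Hx. cbv beta. generalize (exp_pos 1); intros.
  rewrite Rabs_right by (apply Rle_ge, Rlt_le, Rinv_0_lt_compat, pow_lt; lra).
  right. unfold Rdiv. ring.
Qed.

(** * Boole's summation formula for [ln x ^ l / x] *)

Definition boole_sum (l M : nat) (x : R) : R :=
  / 2 * sum_f_R0 (fun k => euler_poly k 0 / INR (fact k) * lnpow_div_deriv l k x) M.

Lemma sum_taylor_exchange (a G : nat -> R) M :
  sum_f_R0 (fun k => a k * sum_f_R0 (fun j => G (k + j)%nat / INR (fact j)) (M - k)) M
  = sum_f_R0 (fun m => G m * sum_f_R0 (fun k => a k / INR (fact (m - k))) m) M.
Proof.
  induction M as [|M IH]; [simpl; field|].
  rewrite tech5, (sum_eq
      (fun k => a k * sum_f_R0 (fun j => G (k + j)%nat / INR (fact j)) (S M - k))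
      (fun k => a k * sum_f_R0 (fun j => G (k + j)%nat / INR (fact j)) (M - k)
                + a k / INR (fact (S M - k)) * G (S M))).
  - rewrite sum_plus, IH, (tech5 _ M), tech5, Nat.sub_diag, <- scal_sum.
    cbn [sum_f_R0]. rewrite Nat.add_0_r. simpl (fact 0). simpl INR. field.
  - intros i Hi. replace (S M - i)%nat with (S (M - i)) by lia. rewrite tech5.
    replace (i + S (M - i))%nat with (S M) by lia. field. apply INR_fact_neq_0.
Qed.

Lemma sum_f_R0_opp (f : nat -> R) n : sum_f_R0 (fun j => - f j) n = - sum_f_R0 f n.
Proof. induction n as [|n IH]; simpl; [|rewrite IH]; ring. Qed.

Lemma boole_defect_eq l M x : (1 <= M)%nat ->
  lnpow_div_deriv l 0 x - boole_sum l M x - boole_sum l M (x + 1) =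
  - / 2 * sum_f_R0 (fun k => euler_poly k 0 / INR (fact k) *
      (lnpow_div_deriv l k (x + 1)
       - sum_f_R0 (fun j => lnpow_div_deriv l (k + j) x / INR (fact j)) (M - k))) M.
Proof.
  intros HM. unfold boole_sum.
  assert (Hconv := sum_taylor_exchange (fun k => euler_poly k 0 / INR (fact k))
                                      (fun m => lnpow_div_deriv l m x) M).
  rewrite (decomp_sum (fun m => lnpow_div_deriv l m x * _)) in Hconv by lia.
  cbv beta in Hconv.
  rewrite (sum_eq
     (fun i => lnpow_div_deriv l (S i) x *
        sum_f_R0 (fun k => euler_poly k 0 / INR (fact k) / INR (fact (S i - k))) (S i))
     (fun i => - (euler_poly (S i) 0 / INR (fact (S i)) * lnpow_div_deriv l (S i) x))),
    sum_f_R0_opp, euler_poly_0_convolution in Hconv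
    by (intros; rewrite euler_poly_0_convolution; field; apply INR_fact_neq_0).
  rewrite (sum_eq (fun k => euler_poly k 0 / INR (fact k) * (lnpow_div_deriv l k (x + 1)
       - sum_f_R0 (fun j => lnpow_div_deriv l (k + j) x / INR (fact j)) (M - k)))
     (fun k => euler_poly k 0 / INR (fact k) * lnpow_div_deriv l k (x + 1)
     - euler_poly k 0 / INR (fact k) *
       sum_f_R0 (fun j => lnpow_div_deriv l (k + j) x / INR (fact j)) (M - k)))
    by (intros; ring).
  rewrite minus_sum, Hconv, (decomp_sum (fun k => _ * lnpow_div_deriv l k x)), euler_poly_0_0
    by lia.
  change (INR (fact 0)) with 1. lra.
Qed.

Lemma taylor_remainder_bigO l M k : (k <= M)%nat ->
  bigO_on (fun x => 1 <= x)
    (fun x => lnpow_div_deriv l k (x + 1)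
              - sum_f_R0 (fun j => lnpow_div_deriv l (k + j) x / INR (fact j)) (M - k))
    (fun x => / x ^ S M).
Proof.
  intros Hk. destruct (lnpow_div_deriv_bigO l (S M)) as [C [HC H]].
  exists C. split; [exact HC|]. intros x Hx.
  destruct (lnpow_div_deriv_taylor l k (M - k) x) as [z [Hz ->]]; [lra|].
  replace (k + S (M - k))%nat with (S M) by lia.
  match goal with |- Rabs (?a + ?b - ?a) <= _ => replace (a + b - a) with b by ring end.
  assert (Hf : 1 <= INR (fact (S (M - k)))) by apply (le_INR 1), lt_O_fact.
  assert (Hxz : 0 < x ^ S M <= z ^ S M) by (split; [apply pow_lt | apply pow_incr]; lra).
  assert (Hs : 1 <= sqrt z) by (rewrite <- sqrt_1; apply sqrt_le_1_alt; lra).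
  unfold Rdiv. rewrite Rabs_mult, Rabs_inv, (Rabs_right (INR _)) by lra.
  apply Rle_trans with (Rabs (lnpow_div_deriv l (S M) z)).
  { rewrite <- (Rmult_1_r (Rabs _)) at 2. apply Rmult_le_compat_l; [apply Rabs_pos|].
    rewrite <- Rinv_1. apply Rinv_le_contravar; lra. }
  eapply Rle_trans; [apply H; lra|]. apply Rmult_le_compat_l; [exact HC|].
  apply Rinv_le_contravar; [lra|]. nra.
Qed.

Lemma boole_defect_bigO l M : (1 <= M)%nat ->
  bigO_on (fun x => 1 <= x)
    (fun x => ln x ^ l / x - boole_sum l M x - boole_sum l M (x + 1)) (fun x => / x ^ S M).
Proof.
  intros HM.
  apply (bigO_on_ext _ (fun x => lnpow_div_deriv l 0 x - boole_sum l M x - boole_sum l M (x + 1)));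
    [intros x Hx; rewrite lnpow_div_deriv_0 by lra; reflexivity|].
  eapply bigO_on_ext; [intros x _; symmetry; apply boole_defect_eq, HM|].
  apply bigO_on_scal, bigO_on_sum. intros k Hk. apply bigO_on_scal, taylor_remainder_bigO, Hk.
Qed.

Lemma boole_sum_bigO l M : bigO_on (fun x => 1 <= x) (boole_sum l M) (fun x => / sqrt x).
Proof.
  apply bigO_on_scal, bigO_on_sum. intros k _. apply bigO_on_scal.
  eapply bigO_on_le; [|apply lnpow_div_deriv_bigO]. intros x Hx.
  assert (Hs : 0 < sqrt x) by (apply sqrt_lt_R0; lra).
  apply Rinv_le_contravar; [exact Hs|].
  rewrite <- (Rmult_1_r (sqrt x)) at 1. apply Rmult_le_compat_l; [lra | apply pow_R1_Rle, Hx].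
Qed.

Lemma asym_term_lnpow_div_deriv l k x : 0 < x ->
  asym_term l k x
  = euler_poly (2 * k + 1) 0 / (2 * INR (fact (2 * k + 1))) * lnpow_div_deriv l (2 * k + 1) x.
Proof.
  intros Hx. unfold asym_term, lnpow_div_deriv, lnpow_coef.
  replace (2 * k + 1 + 1)%nat with (2 * k + 2)%nat by lia.
  field. split; [apply pow_nonzero; lra | apply INR_fact_neq_0].
Qed.

Lemma asym_partial_boole l N x : 0 < x -> asym_partial l N x = boole_sum l (2 * N + 2) x.
Proof.
  intros Hx. induction N as [|N IH].
  - unfold boole_sum. simpl.
    rewrite lnpow_div_deriv_0, lnpow_div_deriv_1, euler_poly_0_0, euler_poly_1_0 by exact Hx.
    rewrite (euler_poly_even_0 1 (le_n 1) : euler_poly 2 0 = 0). simpl. field. lra.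
  - cbn [asym_partial]. rewrite IH, asym_term_lnpow_div_deriv by exact Hx. unfold boole_sum.
    replace (2 * S N + 2)%nat with (S (S (2 * N + 2))) by lia.
    rewrite tech5, tech5. replace (S (S (2 * N + 2))) with (2 * S (S N))%nat by lia.
    rewrite euler_poly_even_0 by lia. replace (S (2 * N + 2)) with (2 * S N + 1)%nat by lia.
    field. split; apply INR_fact_neq_0.
Qed.

Lemma asym_term_bigO l k :
  bigO_on (fun x => exp 1 <= x) (asym_term l k) (fun x => ln x ^ l / x ^ (2 * k + 2)).
Proof.
  eapply bigO_on_ext.
  - intros x Hx. symmetry. apply asym_term_lnpow_div_deriv. generalize (exp_pos 1); lra.
  - apply bigO_on_scal. replace (2 * k + 2)%nat with (2 * k + 1 + 1)%nat by lia.
    apply lnpow_div_deriv_bigO_lnpow.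
Qed.

Lemma alternating_telescope (g P : nat -> R) m :
  sum_f_R0 (fun n => (-1) ^ n * (g n - P n - P (S n))) m
  = sum_f_R0 (fun n => (-1) ^ n * g n) m - P O + (-1) ^ S m * P (S m).
Proof.
  induction m as [|m IH]; [simpl; ring|].
  rewrite tech5, (tech5 (fun n => (-1) ^ n * g n)), IH. simpl pow. ring.
Qed.

Lemma sum_inv_sq_le q m : 1 < q ->
  sum_f_R0 (fun n => / (INR n + q) ^ 2) m <= / (q - 1) - / (INR m + q).
Proof.
  intros Hq.
  assert (Hstep : forall t, 1 < t -> / t ^ 2 <= / (t - 1) - / t).
  { intros t Ht. replace (/ (t - 1) - / t) with (/ (t * (t - 1))) by (field; lra).
    apply Rinv_le_contravar; [apply Rmult_lt_0_compat|simpl]; nra. }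
  induction m as [|m IH].
  - simpl. rewrite Rplus_0_l. apply Hstep, Hq.
  - rewrite tech5. assert (H := Hstep (INR (S m) + q) ltac:(generalize (pos_INR (S m)); lra)).
    replace (INR (S m) + q - 1) with (INR m + q) in H by (rewrite S_INR; ring). lra.
Qed.

Lemma sum_inv_pow_le q m k : 2 <= q -> (1 <= m)%nat ->
  sum_f_R0 (fun n => / (INR n + q) ^ S m) k <= 2 / q ^ m.
Proof.
  intros Hq Hm.
  assert (Hqm : 0 < q ^ pred m) by (apply pow_lt; lra).
  apply Rle_trans with (sum_f_R0 (fun n => / (INR n + q) ^ 2 * / q ^ pred m) k).
  - apply sum_Rle. intros n _. assert (Hn := pos_INR n).
    replace (S m) with (2 + pred m)%nat by lia. rewrite pow_add, Rinv_mult.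
    apply Rmult_le_compat_l; [left; apply Rinv_0_lt_compat, pow_lt; lra|].
    apply Rinv_le_contravar; [exact Hqm | apply pow_incr; lra].
  - rewrite <- scal_sum.
    assert (Hs := sum_inv_sq_le q k ltac:(lra)).
    assert (Hk : 0 < / (INR k + q)) by (apply Rinv_0_lt_compat; generalize (pos_INR k); lra).
    replace (q ^ m) with (q * q ^ pred m) by (destruct m; [lia | reflexivity]).
    apply Rle_trans with (/ q ^ pred m * / (q - 1)).
    + apply Rmult_le_compat_l; [left; apply Rinv_0_lt_compat, Hqm | lra].
    + unfold Rdiv. rewrite Rinv_mult.
      replace (2 * (/ q * / q ^ pred m)) with (/ q ^ pred m * (2 * / q)) by ring.
      apply Rmult_le_compat_l; [left; apply Rinv_0_lt_compat, Hqm|].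
      apply (Rmult_le_reg_r (q * (q - 1))); [nra|].
      replace (/ (q - 1) * (q * (q - 1))) with q by (field; lra).
      replace (2 * / q * (q * (q - 1))) with (2 * (q - 1)) by (field; lra). lra.
Qed.

Lemma is_lim_seq_inv_sqrt q : is_lim_seq (fun n => / sqrt (INR n + q)) 0.
Proof.
  replace (Finite 0) with (Rbar_inv p_infty) by reflexivity.
  apply is_lim_seq_inv; [|discriminate].
  apply (filterlim_comp _ _ _ (fun n => INR n + q) sqrt eventually (Rbar_locally p_infty)).
  - eapply is_lim_seq_plus; [apply is_lim_seq_INR | apply is_lim_seq_const | reflexivity].
  - apply (is_lim_sqrt_p (fun x => x) p_infty), is_lim_id.
Qed.

Lemma alternating_boole_bigO (g P sigma : R -> R) (D : R -> Prop) m :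
  (1 <= m)%nat ->
  (forall q, D q -> 2 <= q) ->
  (forall q, D q ->
     is_lim_seq (fun k => sum_f_R0 (fun n => (-1) ^ n * g (INR n + q)) k) (sigma q)) ->
  bigO_on (fun x => 1 <= x) (fun x => g x - P x - P (x + 1)) (fun x => / x ^ S m) ->
  bigO_on (fun x => 1 <= x) P (fun x => / sqrt x) ->
  bigO_on D (fun q => sigma q - P q) (fun q => / q ^ m).
Proof.
  intros Hm HD Hsigma [C [HC Hdef]] [CP [HCP HP]].
  exists (2 * C). split; [lra|]. intros q Hq. specialize (HD q Hq).
  set (u := fun k => sum_f_R0 (fun n => (-1) ^ n * g (INR n + q)) k).
  assert (Hbound : forall k, Rabs (u k - P q) <= 2 * C * / q ^ m + CP * / sqrt (INR (S k) + q)).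
  { intros k.
    assert (Htel := alternating_telescope (fun n => g (INR n + q)) (fun n => P (INR n + q)) k).
    rewrite (sum_eq _ (fun n => (-1) ^ n * (g (INR n + q) - P (INR n + q) - P (INR n + q + 1))))
      in Htel by (intros n _; rewrite S_INR; do 3 f_equal; ring).
    simpl INR in Htel at 2. rewrite Rplus_0_l in Htel.
    replace (u k - P q) with (sum_f_R0 (fun n => (-1) ^ n *
        (g (INR n + q) - P (INR n + q) - P (INR n + q + 1))) k
        - (-1) ^ S k * P (INR (S k) + q)) by (unfold u; lra).
    eapply Rle_trans; [apply Rabs_triang|]. rewrite Rabs_Ropp, Rabs_mult, pow_1_abs, Rmult_1_l.
    apply Rplus_le_compat; [|apply HP; generalize (pos_INR (S k)); lra].
    eapply Rle_trans; [apply sum_f_R0_triangle|].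
    apply Rle_trans with (C * sum_f_R0 (fun n => / (INR n + q) ^ S m) k).
    - rewrite scal_sum. apply sum_Rle. intros n _.
      rewrite Rabs_mult, pow_1_abs, Rmult_1_l, Rmult_comm. apply Hdef.
      generalize (pos_INR n); lra.
    - replace (2 * C * / q ^ m) with (C * (2 / q ^ m)) by (unfold Rdiv; ring).
      apply Rmult_le_compat_l; [exact HC|].
      apply sum_inv_pow_le; [exact HD | exact Hm]. }
  assert (Hlim := is_lim_seq_le _ _ _ _ Hbound
    (is_lim_seq_abs _ _ (is_lim_seq_minus' _ _ _ _ (Hsigma q Hq) (is_lim_seq_const (P q))))
    (is_lim_seq_plus' _ _ _ _ (is_lim_seq_const (2 * C * / q ^ m))
       (is_lim_seq_scal_l _ CP _ (proj1 (is_lim_seq_incr_1 _ _) (is_lim_seq_inv_sqrt q))))).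
  simpl in Hlim. rewrite Rmult_0_r, Rplus_0_r in Hlim. exact Hlim.
Qed.

(** * Termwise differentiation of [zetaE] *)

Lemma exp_le_compat x y : x <= y -> exp x <= exp y.
Proof. intros [H| ->]; [left; apply exp_increasing, H | right; reflexivity]. Qed.

Lemma pow_exp x k : exp x ^ k = exp (INR k * x).
Proof.
  induction k as [|k IH]; [simpl; rewrite Rmult_0_l, exp_0; reflexivity|].
  rewrite S_INR. simpl pow. rewrite IH, <- exp_plus. f_equal. ring.
Qed.

Lemma pow_mul_exp_le_inv y z k : / 2 <= z -> 0 < y ->
  y ^ k * exp (- z * y) <= INR (fact (S k)) * 2 ^ S k / y.
Proof.
  intros Hz Hy.
  assert (Ht := pow_div_fact_le_exp (y / 2) (S k) ltac:(lra)).
  assert (Hf := INR_fact_lt_0 (S k)).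
  assert (Hp : 0 < (y / 2) ^ S k) by (apply pow_lt; lra).
  assert (Hy2 := exp_pos (y / 2)).
  apply Rle_trans with (y ^ k * / exp (y / 2)).
  - apply Rmult_le_compat_l; [apply pow_le; lra|].
    rewrite <- exp_Ropp. apply exp_le_compat. nra.
  - apply Rle_trans with (y ^ k * / ((y / 2) ^ S k / INR (fact (S k)))).
    + apply Rmult_le_compat_l; [apply pow_le; lra|].
      apply Rinv_le_contravar; [apply Rdiv_lt_0_compat|]; assumption.
    + right. unfold Rdiv. rewrite Rpow_mult_distr, pow_inv. simpl pow.
      field. repeat split; try apply pow_nonzero; try apply INR_fact_neq_0; lra.
Qed.

Lemma pow_mul_exp_decr y1 y2 z k : 0 < y1 -> y1 <= y2 -> INR k <= z * y1 ->
  y2 ^ k * exp (- z * y2) <= y1 ^ k * exp (- z * y1).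
Proof.
  intros H1 H2 H3.
  assert (Hratio : (y2 / y1) ^ k <= exp (z * (y2 - y1))).
  { apply Rle_trans with (exp ((y2 - y1) / y1) ^ k).
    - apply pow_incr. split; [apply Rdiv_le_0_compat; lra|].
      replace (y2 / y1) with (1 + (y2 - y1) / y1) by (field; lra). apply exp_ineq1_le.
    - rewrite pow_exp. apply exp_le_compat.
      apply (Rmult_le_reg_r y1); [exact H1|].
      replace (INR k * ((y2 - y1) / y1) * y1) with (INR k * (y2 - y1)) by (field; lra).
      nra. }
  replace (y2 ^ k * exp (- z * y2))
    with ((y2 / y1) ^ k * exp (- z * (y2 - y1)) * (y1 ^ k * exp (- z * y1))).
  - rewrite <- (Rmult_1_l (y1 ^ k * exp (- z * y1))) at 2.
    apply Rmult_le_compat_r; [apply Rmult_le_pos; [apply pow_le; lra | apply Rlt_le, exp_pos]|].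
    replace (- z * (y2 - y1)) with (- (z * (y2 - y1))) by ring. rewrite exp_Ropp.
    assert (Hpos := exp_pos (z * (y2 - y1))).
    apply (Rmult_le_reg_r (exp (z * (y2 - y1)))); [exact Hpos|].
    rewrite Rmult_assoc, Rinv_l, Rmult_1_r, Rmult_1_l by lra. exact Hratio.
  - replace (- z * y2) with (- z * (y2 - y1) + - z * y1) by ring.
    unfold Rdiv. rewrite Rpow_mult_distr, pow_inv, exp_plus.
    field. apply pow_nonzero. lra.
Qed.

Lemma alternating_sum_bounds (c : nat -> R) a p :
  (forall i, (a <= i)%nat -> 0 <= c (S i) <= c i) -> 0 <= c a ->
  0 <= sum_f_R0 (fun j => (-1) ^ j * c (a + j)%nat) p <= c a.
Proof.
  revert a; induction p as [|p IH]; intros a Hc Ha; [simpl; rewrite Nat.add_0_r; lra|].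
  rewrite decomp_sum by lia. change (pred (S p)) with p.
  rewrite (sum_eq _ (fun j => - ((-1) ^ j * c (S a + j)%nat))), sum_f_R0_opp
    by (intros i _; replace (a + S i)%nat with (S a + i)%nat by lia; simpl; ring).
  assert (IH' := IH (S a) ltac:(intros i Hi; apply Hc; lia) ltac:(apply (Hc a); lia)).
  assert (Hca := Hc a (le_n a)).
  simpl pow. rewrite Nat.add_0_r. lra.
Qed.

Lemma alternating_CVU_cauchy (s : R) (c : R -> nat -> R) (D : R -> Prop) :
  Rabs s = 1 ->
  (forall z n, D z -> 0 <= c z (S n) <= c z n) ->
  (forall eps : posreal, exists N, forall z n, D z -> (N <= n)%nat -> c z n < eps) ->
  CVU_cauchy (fun m z => sum_f_R0 (fun n => s * ((-1) ^ n * c z n)) m) D.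
Proof.
  intros Hs Hmono Hsmall eps. destruct (Hsmall eps) as [N HN]. exists (S N).
  assert (Htail : forall a b z, D z -> (S N <= a)%nat -> (a < b)%nat ->
    Rabs (sum_f_R0 (fun n => s * ((-1) ^ n * c z n)) b
          - sum_f_R0 (fun n => s * ((-1) ^ n * c z n)) a) < eps).
  { intros a b z Hz Ha Hab. rewrite (tech2 _ a b Hab).
    match goal with |- Rabs (?x + ?t - ?x) < _ => replace (x + t - x) with t by ring end.
    rewrite (sum_eq _ (fun i => (-1) ^ i * c z (S a + i)%nat * (s * (-1) ^ S a))),
      <- scal_sum by (intros i _; rewrite pow_add; ring).
    rewrite !Rabs_mult, Hs, pow_1_abs, !Rmult_1_l.
    destruct (alternating_sum_bounds (c z) (S a) (b - S a)) as [H0 H1];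
      [intros i _; apply Hmono, Hz | apply (Hmono z a Hz)|].
    rewrite Rabs_right by lra. eapply Rle_lt_trans; [exact H1 | apply HN; [exact Hz | lia]]. }
  intros n m z Hz Hn Hm.
  destruct (Nat.lt_trichotomy n m) as [Hlt|[<-|Hgt]].
  - rewrite Rabs_minus_sym. apply Htail; assumption.
  - unfold Rminus. rewrite Rplus_opp_r, Rabs_R0. apply cond_pos.
  - apply Htail; assumption.
Qed.

Definition near_one (z : R) : Prop := / 2 < z < 3 / 2.

(* [zeta_term q k n] is the [k]-th [z]-derivative of the [n]-th term of [zetaE z q]. *)
Definition zeta_term (q : R) (k n : nat) (z : R) : R :=
  (-1) ^ k * ((-1) ^ n * (ln (INR n + q) ^ k * exp (- z * ln (INR n + q)))).

Definition zeta_partial (q : R) (k m : nat) (z : R) : R := sum_f_R0 (fun n => zeta_term q k n z) m.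

Definition zetaE_deriv (q : R) (k : nat) (z : R) : R :=
  real (Lim_seq (fun m => zeta_partial q k m z)).

Lemma is_derive_zeta_partial q k m z :
  is_derive (zeta_partial q k m) z (zeta_partial q (S k) m z).
Proof.
  apply (is_derive_sum_f_R0 (fun n y => zeta_term q k n y)). intros n _.
  unfold zeta_term. auto_derive; [exact I | simpl; ring].
Qed.

Lemma open_near_one : open near_one.
Proof. apply open_and; [apply open_gt | apply open_lt]. Qed.

Lemma zeta_partial_CVU q k : exp (2 * INR k + 1) <= q -> CVU_dom (zeta_partial q k) near_one.
Proof.
  intros Hq. apply CVU_dom_cauchy.
  assert (Hk := pos_INR k).
  assert (Hq1 : 1 < q).
  { eapply Rlt_le_trans; [|exact Hq]. rewrite <- exp_0 at 1. apply exp_increasing. lra. }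
  apply exp_le_ln in Hq.
  assert (HL : forall n, ln q <= ln (INR n + q))
    by (intros n; apply ln_le; [|generalize (pos_INR n)]; lra).
  apply (alternating_CVU_cauchy ((-1) ^ k)
           (fun z n => ln (INR n + q) ^ k * exp (- z * ln (INR n + q))));
    [apply pow_1_abs | intros z n [Hz1 Hz2]; split |].
  - apply Rmult_le_pos; [apply pow_le; generalize (HL (S n)); lra | apply Rlt_le, exp_pos].
  - apply pow_mul_exp_decr; [generalize (HL n); lra | | generalize (HL n); nra].
    apply ln_le; [generalize (pos_INR n); lra | rewrite S_INR; lra].
  - intros eps. set (B := INR (fact (S k)) * 2 ^ S k).
    assert (HB : 0 < B) by (apply Rmult_lt_0_compat; [apply INR_fact_lt_0 | apply pow_lt; lra]).
    destruct (INR_unbounded (exp (B / eps))) as [N HN].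
    exists N. intros z n [Hz1 _] Hn.
    assert (HLn : B / eps < ln (INR n + q)).
    { rewrite <- (ln_exp (B / eps)). apply ln_increasing; [apply exp_pos|].
      apply le_INR in Hn. lra. }
    assert (Heps := cond_pos eps).
    eapply Rle_lt_trans; [apply pow_mul_exp_le_inv; [lra | generalize (HL n); lra]|].
    fold B. apply Rlt_div_l; [generalize (HL n); lra|].
    apply Rlt_div_l in HLn; [lra | exact Heps].
Qed.

Lemma is_derive_zetaE_deriv q k z : exp (2 * INR (S k) + 1) <= q -> near_one z ->
  is_derive (zetaE_deriv q k) z (zetaE_deriv q (S k) z).
Proof.
  intros Hq Hz.
  assert (HCVU : forall j, (j <= S k)%nat -> CVU_dom (zeta_partial q j) near_one).
  { intros j Hj. apply zeta_partial_CVU. eapply Rle_trans; [|exact Hq].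
    apply exp_le_compat. apply le_INR in Hj. lra. }
  assert (HD : forall m, Derive (zeta_partial q k m) = zeta_partial q (S k) m).
  { intros m. apply functional_extensionality. intros y.
    apply is_derive_unique, is_derive_zeta_partial. }
  assert (H := CVU_Derive (zeta_partial q k) near_one open_near_one).
  replace (fun m x => Derive (zeta_partial q k m) x) with (zeta_partial q (S k)) in H
    by (apply functional_extensionality; intros m; symmetry; apply HD).
  unfold zetaE_deriv.
  rewrite (Lim_seq_ext (fun m => zeta_partial q (S k) m z) (fun m => Derive (zeta_partial q k m) z))
    by (intros m; rewrite HD; reflexivity).
  apply H; [intros a b x [Ha _] [_ Hb] Hx; split; lra | apply HCVU; lia | | | apply HCVU; lia
           | exact Hz].
  - intros m x _. eexists. apply is_derive_zeta_partial.
  - intros m x _. rewrite HD. apply derivable_continuous_pt.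
    exists (zeta_partial q (S (S k)) m x). apply is_derive_Reals, is_derive_zeta_partial.
Qed.

Lemma zetaE_deriv_0 q z : zetaE z q = zetaE_deriv q 0 z.
Proof.
  unfold zetaE, Series, zetaE_deriv. f_equal. apply Lim_seq_ext. intros m.
  rewrite sum_n_Reals. apply sum_eq. intros n _. unfold zeta_term, Rpower. simpl. ring.
Qed.

Lemma mstieltjes_zetaE_deriv l q :
  exp (2 * INR l + 1) <= q -> mstieltjes l q = (-1) ^ l * zetaE_deriv q l 1.
Proof.
  intros Hq. unfold mstieltjes. f_equal.
  apply (Derive_n_chain _ (zetaE_deriv q) near_one l);
    [apply open_near_one | intros; apply zetaE_deriv_0 | | lia | unfold near_one; lra].
  intros k x Hk Hx. apply is_derive_zetaE_deriv; [|exact Hx].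
  eapply Rle_trans; [|exact Hq]. apply exp_le_compat. apply le_INR in Hk. lra.
Qed.

Lemma mstieltjes_alternating_series l q : exp (2 * INR l + 1) <= q ->
  is_lim_seq (fun m => sum_f_R0 (fun n => (-1) ^ n * (ln (INR n + q) ^ l / (INR n + q))) m)
    (mstieltjes l q).
Proof.
  intros Hq. rewrite mstieltjes_zetaE_deriv by exact Hq.
  assert (Hq0 : 0 < q) by (eapply Rlt_le_trans; [apply exp_pos | exact Hq]).
  assert (Hfin : ex_finite_lim_seq (fun m => zeta_partial q l m 1)).
  { apply (CVU_CVS_dom _ near_one (zeta_partial_CVU q l Hq)). unfold near_one. lra. }
  apply (is_lim_seq_ext (fun m => (-1) ^ l * zeta_partial q l m 1)).
  - intros m. unfold zeta_partial. rewrite scal_sum. apply sum_eq. intros n _.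
    assert (Hn : 0 < INR n + q) by (generalize (pos_INR n); lra).
    unfold zeta_term. replace (- (1) * ln (INR n + q)) with (- ln (INR n + q)) by ring.
    rewrite exp_Ropp, exp_ln by exact Hn.
    transitivity ((-1) ^ l * (-1) ^ l * ((-1) ^ n * (ln (INR n + q) ^ l / (INR n + q))));
      [unfold Rdiv; ring|].
    rewrite <- Rpow_mult_distr. replace (-1 * -1) with 1 by ring. rewrite pow1. ring.
  - apply (is_lim_seq_scal_l _ _ (Finite _)), Lim_seq_correct', Hfin.
Qed.

Lemma mstieltjes_asym_partial_bigO l N :
  bigO_on (fun q => exp (2 * INR l + 2) <= q)
    (fun q => mstieltjes l q - asym_partial l (S N) q) (fun q => / q ^ (2 * N + 4)).
Proof.
  assert (Hdom : forall q, exp (2 * INR l + 2) <= q -> exp (2 * INR l + 1) <= q /\ 2 <= q).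
  { intros q Hq. generalize (pos_INR l) (exp_ineq1_le 1)
      (exp_le_compat 1 (2 * INR l + 2)) (exp_le_compat (2 * INR l + 1) (2 * INR l + 2)).
    intros. split; lra. }
  apply (bigO_on_ext _ (fun q => mstieltjes l q - boole_sum l (2 * N + 4) q)).
  - intros q Hq. rewrite asym_partial_boole by (destruct (Hdom q Hq); lra).
    replace (2 * S N + 2)%nat with (2 * N + 4)%nat by lia. reflexivity.
  - apply (alternating_boole_bigO (fun x => ln x ^ l / x)); [lia | apply Hdom | | | ].
    + intros q Hq. apply mstieltjes_alternating_series, Hdom, Hq.
    + apply boole_defect_bigO. lia.
    + apply boole_sum_bigO.
Qed.

Theorem theorem3p17 (l N : nat) :
  exists (K Q : R), 0 < Q /\
    forall q : R, Q <= q ->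
      Rabs (mstieltjes l q - asym_partial l N q)
        <= K * (ln q ^ l / q ^ (2 * N + 4)).
Proof.
  set (D := fun q => exp (2 * INR l + 2) <= q).
  assert (HD : forall q, D q -> exp 1 <= q /\ 1 <= ln q ^ l).
  { intros q Hq. assert (H1 : exp 1 <= q).
    { eapply Rle_trans; [|exact Hq]. apply exp_le_compat. generalize (pos_INR l). lra. }
    split; [exact H1|]. apply pow_R1_Rle, exp_le_ln, H1. }
  assert (Hbound : bigO_on D (fun q => mstieltjes l q - asym_partial l N q)
                     (fun q => ln q ^ l / q ^ (2 * N + 4))).
  { apply (bigO_on_ext _ (fun q => (mstieltjes l q - asym_partial l (S N) q)
                                   + asym_term l (S N) q)); [intros; simpl; ring|].
    apply bigO_on_plus.
    - eapply bigO_on_le; [|apply mstieltjes_asym_partial_bigO].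
      intros q Hq. destruct (HD q Hq) as [H1 H2]. unfold Rdiv.
      rewrite <- (Rmult_1_l (/ q ^ _)) at 1. apply Rmult_le_compat_r; [|exact H2].
      apply Rlt_le, Rinv_0_lt_compat, pow_lt. generalize (exp_pos 1). lra.
    - replace (2 * N + 4)%nat with (2 * S N + 2)%nat by lia.
      apply (bigO_on_sub_dom (fun q => exp 1 <= q)); [apply HD | apply asym_term_bigO]. }
  destruct Hbound as [K [_ HK]]. exists K, (exp (2 * INR l + 2)).
  split; [apply exp_pos | exact HK].
Qed.
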